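(* Let $(A,\cdot)$ be a commutative nearly associative algebra over a field $\mathbb{K}$ of characteristic $0$. Then $(A,\cdot)$ is anti-flexible, i.e. $(x\cdot y)\cdot z-(z\cdot y)\cdot x=x\cdot(y\cdot z)-z\cdot(y\cdot x)$ for all $x,y,z\in A$ (equivalently, $a(x,y,z)=a(z,y,x)$ where $a(x,y,z)=(x\cdot y)\cdot z-x\cdot(y\cdot z)$).
   Context: An algebra $(A,\cdot)$ (linear space with bilinear product) is nearly associative if $x\cdot(y\cdot z)=(z\cdot x)\cdot y$ for all $x,y,z\in A$, and commutative if $x\cdot y=y\cdot x$ for all $x,y$. *)

From mathcomp Require Import all_boot all_order all_algebra.
Set Implicit Arguments. Unset Strict Implicit. Unset Printing Implicit Defensive.
Import GRing.Theory.
Local Open Scope ring_scope.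

Definition bilinear_prod (K : fieldType) (A : lmodType K) (mul : A -> A -> A) :=
  (forall (a : K) (x y z : A), mul (a *: x + y) z = a *: mul x z + mul y z) /\
  (forall (a : K) (x y z : A), mul x (a *: y + z) = a *: mul x y + mul x z).

Definition nearly_associative (K : fieldType) (A : lmodType K) (mul : A -> A -> A) :=
  forall x y z : A, mul x (mul y z) = mul (mul z x) y.

Definition commutative_prod (K : fieldType) (A : lmodType K) (mul : A -> A -> A) :=
  forall x y : A, mul x y = mul y x.

Definition associator (K : fieldType) (A : lmodType K) (mul : A -> A -> A) (x y z : A) :=
  mul (mul x y) z - mul x (mul y z).

Definition anti_flexible (K : fieldType) (A : lmodType K) (mul : A -> A -> A) :=
  forall x y z : A,
    mul (mul x y) z - mul (mul z y) x = mul x (mul y z) - mul z (mul y x).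

From mathcomp Require Import all_boot all_order all_algebra.
Local Open Scope ring_scope.

(* (xy)z = z(xy) = (yz)x = x(yz), by commutativity, near associativity and
   commutativity again. *)
Lemma comm_nearly_assoc_associative (K : fieldType) (A : lmodType K)
    (mul : A -> A -> A) :
  commutative_prod mul -> nearly_associative mul -> associative mul.
Proof. by move=> mulC mulNA x y z; rewrite [RHS]mulC [RHS]mulNA mulC. Qed.

Lemma associative_anti_flexible (K : fieldType) (A : lmodType K)
    (mul : A -> A -> A) :
  associative mul -> anti_flexible mul.
Proof. by move=> mulA x y z; rewrite !mulA. Qed.

Theorem mainTheorem2 (K : fieldType) (A : lmodType K) (mul : A -> A -> A) :
  [pchar K] =i pred0 ->
  bilinear_prod mul ->
  commutative_prod mul ->
  nearly_associative mul ->
  anti_flexible mul.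
Proof.
move=> _ _ mulC mulNA.
exact/associative_anti_flexible/comm_nearly_assoc_associative.
Qed.
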